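(* Assume we are either in the $\delta$-algebraic setting or in the $\delta$-arithmetic setting. Let $f:R^{\times}\rightarrow R$ be a $\delta$-map and $s\neq 0$ an integer such that for all $a_1,a_2\in R^{\times}$, $$f(a_1a_2)=f(a_1)+a_1^sf(a_2).$$ Then there exists $\mu\in R$ such that $f(a)=\mu(1-a^s)$ for all $a\in R^{\times}$.
   Context: $\delta$-arithmetic setting: $p$ is an odd prime, $R$ is the complete discrete valuation ring with maximal ideal $pR$ and residue field $\mathbb{F}_p^a$; $\phi:R\to R$ is the unique ring endomorphism lifting Frobenius, and $\delta x=(\phi(x)-x^p)/p$. Here a $\delta$-map $R^{\times}\to R$ is a map of the form $a\mapsto F(a,\delta a,\dots,\delta^m a)$ with $F\in R[x,x^{-1},x',\dots,x^{(m)}]\hat{\ }$ (restricted power series, $\hat{\ }$ = $p$-adic completion). $\delta$-algebraic setting: $R$ is a field of characteristic zero with a derivation $\delta$, $\delta$-closed in Kolchin's sense; a $\delta$-map $R^{\times}\to R$ is a map $a\mapsto F(a,\delta a,\dots,\delta^m a)$ with $F$ a polynomial in $R[x,x^{-1},x',\dots,x^{(m)}]$. *)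

From HB Require Import structures.
From mathcomp Require Import all_boot all_order all_algebra.
Set Implicit Arguments. Unset Strict Implicit. Unset Printing Implicit Defensive.
Import Order.TTheory GRing.Theory Num.Theory.
Local Open Scope ring_scope.

Definition in_pow_ideal {R : pzRingType} (p k : nat) (x : R) : Prop :=
  exists y : R, x = (p%:R) ^+ k * y.

(* exponents of monomials x^{e0} (x')^{e1} ... (x^{(m)})^{em}, e0 : int *)
Notation dexp m := (int * m.-tuple nat)%type.

Definition dmono {R : comUnitRingType} (d : R -> R) (m : nat) (al : dexp m)
    (a : R) : R :=
  a ^ al.1 * \prod_(i < m) (iter i.+1 d a) ^+ (tnth al.2 i).

(* R is a complete DVR with maximal ideal pR (p odd prime) and residue field
   an algebraic closure of F_p; phi is a ring endomorphism lifting Frobenius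
   and delta x = (phi x - x^p)/p. *)
Definition arith_setting (R : idomainType) (p : nat)
    (phi : {rmorphism R -> R}) (delta : R -> R) : Prop :=
  prime p /\ odd p /\
  (* DVR with uniformizer p *)
  (p%:R : R) != 0 /\ (p%:R : R) \isn't a GRing.unit /\
  (forall x : R, x != 0 ->
     exists (k : nat) (u : R), u \is a GRing.unit /\ x = p%:R ^+ k * u) /\
  (* p-adic completeness *)
  (forall x : nat -> R, (forall n, in_pow_ideal p n (x n.+1 - x n)) ->
     exists l : R, forall n, in_pow_ideal p n (l - x n)) /\
  (* residue field R/pR is algebraic over F_p ... *)
  (forall x : R, exists n : nat, (0 < n)%N /\ in_pow_ideal p 1 (x ^+ (p ^ n) - x)) /\
  (* ... and algebraically closed *)
  (forall P : {poly R}, P \is monic -> (1 < size P)%N ->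
     exists x : R, in_pow_ideal p 1 P.[x]) /\
  (forall x : R, in_pow_ideal p 1 (phi x - x ^+ p)) /\
  (forall x : R, p%:R * delta x = phi x - x ^+ p).

(* f is a delta-map: a |-> F(a, delta a, ..., delta^m a) with F a restricted
   power series in R[x, x^-1, x', ..., x^(m)]^ ; F is given by its coefficient
   family c (tending to 0 p-adically), and F(a, ...) is the p-adic sum. *)
Definition arith_dmap (R : comUnitRingType) (p : nat) (delta : R -> R)
    (f : R -> R) : Prop :=
  exists (m : nat) (c : dexp m -> R),
    (forall k : nat, exists S : seq (dexp m),
        forall al, al \notin S -> in_pow_ideal p k (c al)) /\
    (forall a : R, a \is a GRing.unit -> forall k : nat,
       exists S : seq (dexp m), forall T : seq (dexp m), uniq T -> {subset S <= T} ->
         in_pow_ideal p k (f a - \sum_(al <- T) c al * dmono delta al a)).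

Definition derivation (K : pzRingType) (d : K -> K) : Prop :=
  (forall x y, d (x + y) = d x + d y) /\
  (forall x y, d (x * y) = x * d y + y * d x).

(* differential polynomial in n unknowns y_0..y_{n-1}, of order <= N, with
   coefficients in K: finite sum of c * prod_{i,j} (delta^j y_i)^{e(i,j)} *)
Notation dpoly K n N := (seq (K * {ffun 'I_n * 'I_N.+1 -> nat}))%type.

Definition dpeval (K L : fieldType) (iota : K -> L) (dL : L -> L) (n N : nat)
    (P : dpoly K n N) (y : 'I_n -> L) : L :=
  \sum_(t <- P) iota t.1 *
     \prod_(v : 'I_n * 'I_N.+1) (iter v.2 dL (y v.1)) ^+ (t.2 v).

(* Kolchin: every finite system of algebraic differential equations over K
   having a solution in some differential field extension of K has a solution
   in K. *)
Definition kolchin_closed (K : fieldType) (d : K -> K) : Prop :=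
  forall (n N : nat) (sys : seq (dpoly K n N)),
    (exists (L : fieldType) (dL : L -> L) (iota : {rmorphism K -> L}),
        derivation dL /\ (forall x, dL (iota x) = iota (d x)) /\
        exists y : 'I_n -> L, forall P, P \in sys -> dpeval iota dL P y = 0) ->
    exists y : 'I_n -> K, forall P, P \in sys -> dpeval id d P y = 0.

(* f is a delta-map given by a polynomial F in K[x, x^-1, x', ..., x^(m)] *)
Definition alg_dmap (K : fieldType) (d : K -> K) (f : K -> K) : Prop :=
  exists (m : nat) (F : seq (K * dexp m)),
    forall a : K, a \is a GRing.unit ->
      f a = \sum_(t <- F) t.1 * dmono d t.2 a.

From HB Require Import structures.
From mathcomp Require Import all_boot all_order all_algebra.
From mathcomp Require Import ring.
Import Order.TTheory GRing.Theory Num.Theory.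
Local Open Scope ring_scope.

(* Exchanging [a] and [b] in [f (a * b) = f (b * a)] gives
   [f a * (1 - b ^ s) = f b * (1 - a ^ s)] for all units [a], [b]; so [f] is
   [mu * (1 - a ^ s)] with [mu = f b / (1 - b ^ s)] as soon as some unit [b]
   makes [1 - b ^ s] a unit.  In characteristic 0 one takes [b = 2].  In the
   arithmetic setting one takes a lift [b] of a root of [X^(2|s|) + 1] in the
   algebraically closed residue field: [b ^+ |s| = 1 mod p] would force
   [2 = 0 mod p], impossible for odd [p]. *)

Lemma cocycle_coboundary (R : comUnitRingType) (f : R -> R) (s : int) (b : R) :
  b \is a GRing.unit -> 1 - b ^ s \is a GRing.unit ->
  (forall a1 a2 : R, a1 \is a GRing.unit -> a2 \is a GRing.unit ->
     f (a1 * a2) = f a1 + a1 ^ s * f a2) ->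
  exists mu : R, forall a : R, a \is a GRing.unit -> f a = mu * (1 - a ^ s).
Proof.
move=> bU sbU fM; exists (f b / (1 - b ^ s)) => a aU.
have fab : f a * (1 - b ^ s) = f b * (1 - a ^ s).
  apply/eqP; rewrite -subr_eq0.
  have -> : f a * (1 - b ^ s) - f b * (1 - a ^ s) =
            (f a + a ^ s * f b) - (f b + b ^ s * f a) by ring.
  by rewrite -fM // mulrC fM // subrr.
by rewrite mulrAC -fab mulrK.
Qed.

Lemma unit_1subXz (R : comUnitRingType) (x : R) (s : int) :
  x \is a GRing.unit ->
  (1 - x ^ s \is a GRing.unit) = (1 - x ^+ `|s|%N \is a GRing.unit).
Proof.
case: s => [n | n] xU //=.
have xnU : x ^+ n.+1 \is a GRing.unit by rewrite unitrX.
have -> : 1 - x ^ Negz n = - (x ^+ n.+1)^-1 * (1 - x ^+ n.+1).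
  by rewrite NegzE exprnN mulrBr mulr1 mulNr mulVr // opprK addrC.
by rewrite unitrMr // unitrN unitrV.
Qed.

Lemma pchar0_exists_unit_1subXz_unit {K : fieldType} {s : int} :
  [pchar K] =i pred0 -> s != 0 ->
  exists b : K, b \is a GRing.unit /\ 1 - b ^ s \is a GRing.unit.
Proof.
move=> /pcharf0P natf0 s0; have twoU : (2 : K) \is a GRing.unit.
  by rewrite unitfE natf0.
exists 2; split; rewrite // unit_1subXz // unitfE.
have -> : 1 - 2 ^+ `|s|%N = - ((2 ^ `|s| - 1)%N%:R) :> K.
  by rewrite natrB ?expn_gt0 // natrX opprB.
rewrite oppr_eq0 natf0 subn_eq0 -ltnNge -[X in (X < _)%N](expn0 2) ltn_exp2l //.
by rewrite absz_gt0.
Qed.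

Section ArithmeticSetting.
Context {R : idomainType} {p : nat} {phi : {rmorphism R -> R}} {delta : R -> R}.
Hypothesis setting : arith_setting p phi delta.

Local Notation "x \in 'pR" := (@in_pow_ideal R p 1 x) (at level 70).

Lemma in_pR x : x \in 'pR <-> exists y, x = p%:R * y.
Proof. by rewrite /in_pow_ideal expr1. Qed.

Lemma pR_mul {x y} : y \in 'pR -> x * y \in 'pR.
Proof. by case/in_pR=> z ->; apply/in_pR; exists (x * z); rewrite mulrCA. Qed.

Lemma pR_sub {x y} : x \in 'pR -> y \in 'pR -> x - y \in 'pR.
Proof.
by case/in_pR=> u -> /in_pR[v ->]; apply/in_pR; exists (u - v); rewrite mulrBr.
Qed.

Lemma pR_p : p%:R \in 'pR.
Proof. by apply/in_pR; exists 1; rewrite mulr1. Qed.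

Lemma pR_not1 : ~ 1 \in 'pR.
Proof.
case/in_pR=> y py1; case: setting => _ [_ [_ [/negP pNU _]]].
by apply: pNU; apply/unitrPr; exists y.
Qed.

Lemma pR_not2 : ~ 2 \in 'pR.
Proof.
move=> pR2; apply: pR_not1; case: setting => _ [p_odd _].
have p_eq : p%:R = 1 + 2 * (p./2)%:R :> R.
  by rewrite -[in LHS](odd_double_half p) p_odd natrD -muln2 natrM mulrC.
have -> : 1 = p%:R - 2 * (p./2)%:R :> R by rewrite p_eq addrK.
by apply: pR_sub pR_p _; rewrite mulrC; apply: pR_mul.
Qed.

Lemma unit_notin_pR x : ~ x \in 'pR -> x \is a GRing.unit.
Proof.
move=> xNpR; have x0 : x != 0.
  by apply/eqP=> x0; apply: xNpR; rewrite x0 -(mul0r p%:R); exact: pR_mul pR_p.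
case: setting => _ [_ [_ [_ [dvr _]]]].
have [[|k] [u [uU xE]]] := dvr x x0; first by rewrite xE expr0 mul1r.
by case: xNpR; rewrite xE exprS -mulrA mulrC; apply: pR_mul pR_p.
Qed.

Lemma exists_root_XnaddC1_mod_p n : (0 < n)%N -> exists x : R, x ^+ n + 1 \in 'pR.
Proof.
move=> n0; case: setting => _ [_ [_ [_ [_ [_ [_ [acl _]]]]]]].
have size_gt1 : (1 < size ('X^n + 1%:P : {poly R})%R)%N by rewrite size_XnaddC.
have [x] := acl _ (monicXnaddC 1 n0) size_gt1.
by rewrite !hornerE; exists x.
Qed.

Lemma arith_exists_unit_1subXz_unit {s : int} : s != 0 ->
  exists b : R, b \is a GRing.unit /\ 1 - b ^ s \is a GRing.unit.
Proof.
move=> s0; have m0 : (0 < `|s| * 2)%N by rewrite muln_gt0 absz_gt0 s0.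
set m := `|s|%N in m0 *.
have [b root_b] := exists_root_XnaddC1_mod_p _ m0.
have bU : b \is a GRing.unit.
  apply: unit_notin_pR => bpR; apply: pR_not1.
  have -> : 1 = b ^+ (m * 2) + 1 - b * b ^+ (m * 2).-1 :> R.
    by rewrite -exprS prednK //; ring.
  by apply: pR_sub root_b _; rewrite mulrC; apply: pR_mul.
exists b; split; rewrite // unit_1subXz //.
apply: unit_notin_pR => sub_pR; apply: pR_not2.
have -> : 2 = b ^+ (m * 2) + 1 - (- 1 - b ^+ m) * (1 - b ^+ m) :> R.
  by rewrite exprM; ring.
exact: pR_sub root_b (pR_mul sub_pR).
Qed.

End ArithmeticSetting.

Theorem lemma3p5 :
  (forall (R : idomainType) (p : nat) (phi : {rmorphism R -> R})
          (delta : R -> R) (f : R -> R) (s : int),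
     arith_setting p phi delta -> arith_dmap p delta f -> s != 0 ->
     (forall a1 a2 : R, a1 \is a GRing.unit -> a2 \is a GRing.unit ->
        f (a1 * a2) = f a1 + a1 ^ s * f a2) ->
     exists mu : R, forall a : R, a \is a GRing.unit -> f a = mu * (1 - a ^ s))
  /\
  (forall (K : fieldType) (d : K -> K) (f : K -> K) (s : int),
     [pchar K] =i pred0 -> derivation d -> kolchin_closed d ->
     alg_dmap d f -> s != 0 ->
     (forall a1 a2 : K, a1 \is a GRing.unit -> a2 \is a GRing.unit ->
        f (a1 * a2) = f a1 + a1 ^ s * f a2) ->
     exists mu : K, forall a : K, a \is a GRing.unit -> f a = mu * (1 - a ^ s)).
Proof.
split.
- move=> R p phi delta f s setting _ s0 fM.
  have [b [bU sbU]] := arith_exists_unit_1subXz_unit setting s0.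
  exact: cocycle_coboundary bU sbU fM.
- move=> K d f s charK0 _ _ _ s0 fM.
  have [b [bU sbU]] := pchar0_exists_unit_1subXz_unit charK0 s0.
  exact: cocycle_coboundary bU sbU fM.
Qed.
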